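(* Let $\dot x=f(x)+\sum_{i=1}^m g_i(x)u_i$ with $m\ge2$, and let $h:\mathbb{R}^n\to\mathbb{R}$ have relative degree $r<n$ at $x$, with $\xi=[h,L_fh,\dots,L_f^{r-1}h]^\top$. If $g_1(x),\dots,g_m(x)$ are linearly independent, then there is no map $\eta:\mathbb{R}^n\to\mathbb{R}^{n-r}$, differentiable at $x$, that satisfies both of the following: (1) the Jacobian $\begin{bmatrix} d\xi\\ d\eta\end{bmatrix}\in\mathbb{R}^{n\times n}$ is nonsingular at $x$; and (2) there is an open set around $x$ on which $L_{g_i}\eta_j=0$ for all $i=1,\dots,m$ and $j=1,\dots,n-r$.
   Context: $L_f$, $L_{g_i}$ denote Lie derivatives along vector fields. $h$ has relative degree $r$ at $x$ if for all $i=1,\dots,m$ and $k=0,\dots,r-2$, $L_{g_i}L_f^k h\equiv0$ on an open set around $x$, and the row vector $[L_{g_1}L_f^{r-1}h(x),\dots,L_{g_m}L_f^{r-1}h(x)]$ has a nonzero entry. *)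

From HB Require Import structures.
From mathcomp Require Import all_boot all_order all_algebra.
From mathcomp Require Import all_classical all_reals all_analysis.
Set Implicit Arguments. Unset Strict Implicit. Unset Printing Implicit Defensive.
Import Order.TTheory GRing.Theory Num.Theory.
Import numFieldNormedType.Exports.
Local Open Scope classical_set_scope.
Local Open Scope ring_scope.

Section Defs.
Variables (R : realType) (n : nat).
Notation V := 'rV[R]_n.

Fixpoint iterD (W : normedModType R) (F : V -> W) (vs : seq V) : V -> W :=
  match vs with
  | [::] => F
  | v :: vs' => fun y => 'D_v (iterD F vs') y
  end.

Definition smooth (W : normedModType R) (F : V -> W) : Prop :=
  forall (vs : seq V) (y : V), differentiable (iterD F vs) y.

Definition Lie (g : V -> V) (phi : V -> R) : V -> R :=
  fun y => 'D_(g y) phi y.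

Definition Lien (f : V -> V) (k : nat) (h : V -> R) : V -> R :=
  iter k (Lie f) h.

Definition rel_degree (m : nat) (f : V -> V) (g : 'I_m -> V -> V)
    (h : V -> R) (r : nat) (x : V) : Prop :=
  (0 < r)%N /\
  (exists U : set V, open U /\ U x /\
     forall (i : 'I_m) (k : nat), (k.+2 <= r)%N ->
       forall y, U y -> Lie (g i) (Lien f k h) y = 0) /\
  (exists i : 'I_m, Lie (g i) (Lien f r.-1 h) x != 0).

Definition grad (phi : V -> R) (x : V) : 'rV[R]_n :=
  \row_(l < n) 'D_(delta_mx 0 l) phi x.

End Defs.

From Pilot Require Import Defs.
From HB Require Import structures.
From mathcomp Require Import all_boot all_order all_algebra.
From mathcomp Require Import all_classical all_reals all_analysis.
From mathcomp Require Import zify.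
Set Implicit Arguments. Unset Strict Implicit. Unset Printing Implicit Defensive.
Import Order.TTheory GRing.Theory Num.Theory.
Import numFieldNormedType.Exports.
Local Open Scope classical_set_scope.
Local Open Scope ring_scope.

(* Stack the gradients at x of xi_1, ..., xi_r, eta_1, ..., eta_(n-r) into the
   Jacobian J and the vectors g_1(x), ..., g_m(x) into the columns of G^T.
   The entries of J G^T are the Lie derivatives L_(g_i) at x of these
   functions: they vanish for eta by (2) and for xi_k, k < r, by the relative
   degree, so only the row of xi_r survives and J G^T has rank at most 1.
   As J is invertible, G has rank at most 1, so g_1(x), ..., g_m(x) cannot be
   linearly independent when m >= 2. *)

Lemma mxrank_le1_unitmx_mul (F : fieldType) (n m : nat) (M : 'M[F]_n)
    (A : 'M[F]_(n, m)) (i : 'I_n) :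
  M \in unitmx -> (forall a, a != i -> row a (M *m A) = 0) ->
  (\rank A <= 1)%N.
Proof.
move=> M_unit rows0.
have MA_sub_row : (M *m A <= row i (M *m A))%MS.
  apply/row_subP => a; have [->|/rows0 ->] := eqVneq a i; first exact: submx_refl.
  exact: sub0mx.
have -> : A = invmx M *m (M *m A) by rewrite mulmxA mulVmx // mul1mx.
apply: leq_trans (mxrankM_maxr _ _) _.
exact: leq_trans (mxrankS MA_sub_row) (rank_leq_row _).
Qed.

Lemma row_castmx (F : Type) (p p' q : nat) (e : p = p') (A : 'M[F]_(p, q))
    (a : 'I_p') :
  row a (castmx (e, erefl q) A) = row (cast_ord (esym e) a) A.
Proof. by apply/rowP => l; rewrite !mxE castmxE cast_ord_id. Qed.

Lemma differentiable_coord_comp (R : realType) (V : normedModType R) (p : nat)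
    (F : V -> 'rV[R]_p) (j : 'I_p) x :
  differentiable F x -> differentiable (fun z => F z 0 j) x.
Proof.
move=> dF; apply: (@differentiable_comp _ _ _ _ F (fun M : 'rV[R]_p => M 0 j)).
  exact: dF.
exact: differentiable_coord.
Qed.

Section Derivatives.
Variables (R : realType) (n : nat).
Notation V := 'rV[R]_n.

Lemma iterD_rcons (W : normedModType R) (F : V -> W) vs v :
  Defs.iterD F (rcons vs v) = Defs.iterD (fun y => 'D_v F y) vs.
Proof. by elim: vs => //= w vs ->. Qed.

Definition differentiable_upto (k : nat) (phi : V -> R) : Prop :=
  forall vs : seq V, (size vs <= k)%N -> forall y, differentiable (Defs.iterD phi vs) y.

Lemma differentiable_upto0 phi :
  differentiable_upto 0 phi <-> forall y, differentiable phi y.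
Proof.
split; first by move=> phi_diff y; exact: (phi_diff [::]).
by move=> phi_diff [|//] _ y; exact: phi_diff.
Qed.

Lemma differentiable_uptoS k phi : differentiable_upto k.+1 phi <->
  (forall y, differentiable phi y) /\
  forall v, differentiable_upto k (fun y => 'D_v phi y).
Proof.
split=> [phi_diff|[phi_diff Dphi_diff] vs].
  split=> [y|v vs vs_le y]; first exact: (phi_diff [::]).
  by rewrite -iterD_rcons; apply: phi_diff; rewrite size_rcons.
case/lastP: vs => [|vs v] vs_le y; first exact: phi_diff.
by rewrite iterD_rcons; apply: Dphi_diff; rewrite size_rcons in vs_le.
Qed.

Lemma differentiable_uptoW k phi :
  differentiable_upto k.+1 phi -> differentiable_upto k phi.
Proof. by move=> phi_diff vs vs_le; apply: phi_diff; exact: leqW. Qed.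

Lemma differentiable_upto_cst k c : differentiable_upto k (fun _ => c).
Proof.
elim: k c => [|k IHk] c; first by apply/differentiable_upto0 => y.
apply/differentiable_uptoS; split=> // v.
have -> : (fun y => 'D_v (fun _ : V => c) y) = (fun _ => 0).
  by apply/funext => y; exact: derive_cst.
exact: IHk.
Qed.

Lemma differentiable_uptoD k phi psi :
  differentiable_upto k phi -> differentiable_upto k psi ->
  differentiable_upto k (fun y => phi y + psi y).
Proof.
elim: k phi psi => [|k IHk] phi psi.
  move=> /differentiable_upto0 phi_diff /differentiable_upto0 psi_diff.
  by apply/differentiable_upto0 => y; exact: differentiableD.
move=> /differentiable_uptoS[phi_diff Dphi] /differentiable_uptoS[psi_diff Dpsi].
apply/differentiable_uptoS; split=> [y|v]; first exact: differentiableD.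
have -> : (fun y => 'D_v (fun y => phi y + psi y) y) =
          (fun y => 'D_v phi y + 'D_v psi y).
  by apply/funext => y; rewrite deriveD //; exact: diff_derivable.
exact: IHk.
Qed.

Lemma differentiable_uptoM k phi psi :
  differentiable_upto k phi -> differentiable_upto k psi ->
  differentiable_upto k (fun y => phi y * psi y).
Proof.
elim: k phi psi => [|k IHk] phi psi.
  move=> /differentiable_upto0 phi_diff /differentiable_upto0 psi_diff.
  by apply/differentiable_upto0 => y; exact: differentiableM.
move=> phi_k1 psi_k1.
have [phi_diff Dphi] := (differentiable_uptoS _ _).1 phi_k1.
have [psi_diff Dpsi] := (differentiable_uptoS _ _).1 psi_k1.
apply/differentiable_uptoS; split=> [y|v]; first exact: differentiableM.
have -> : (fun y => 'D_v (fun y => phi y * psi y) y) =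
          (fun y => phi y * 'D_v psi y + psi y * 'D_v phi y).
  by apply/funext => y; rewrite deriveM //; exact: diff_derivable.
by apply: differentiable_uptoD; apply: IHk => //; exact: differentiable_uptoW.
Qed.

Lemma differentiable_upto_sum k (I : Type) (s : seq I) (F : I -> V -> R) :
  (forall i, differentiable_upto k (F i)) ->
  differentiable_upto k (fun y => \sum_(i <- s) F i y).
Proof.
move=> F_diff; elim: s => [|a s IHs].
  under eq_fun do rewrite big_nil; exact: differentiable_upto_cst.
under eq_fun do rewrite big_cons; exact: differentiable_uptoD.
Qed.

Lemma smoothE (phi : V -> R) : smooth phi <-> forall k, differentiable_upto k phi.
Proof.
split=> [phi_smooth k vs _ y|phi_diff vs y]; first exact: phi_smooth.
exact: (phi_diff (size vs)).
Qed.

Lemma smooth_derive (phi : V -> R) v : smooth phi -> smooth (fun y => 'D_v phi y).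
Proof. by move=> phi_smooth vs y; rewrite -iterD_rcons; exact: phi_smooth. Qed.

Lemma derive_coord (p : nat) (F : V -> 'rV[R]_p) y w (l : 'I_p) :
  derivable F y w ->
  'D_w (fun z => F z 0 l) y = 'D_w F y 0 l.
Proof.
move=> dF; apply: cvg_lim => //.
have := cvg_comp _ _ dF (@coord_continuous R 1 p 0 l _).
apply: cvg_trans; apply: near_eq_cvg; near=> t => /=.
by rewrite !mxE.
Unshelve. all: end_near.
Qed.

Lemma iterD_coord (p : nat) (F : V -> 'rV[R]_p) (l : 'I_p) vs : smooth F ->
  Defs.iterD (fun z => F z 0 l) vs = (fun z => Defs.iterD F vs z 0 l).
Proof.
move=> F_smooth; elim: vs => [//|w vs IHvs] /=.
rewrite IHvs; apply/funext => y; rewrite derive_coord //.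
exact/diff_derivable/F_smooth.
Qed.

Lemma smooth_coord (p : nat) (F : V -> 'rV[R]_p) (l : 'I_p) :
  smooth F -> smooth (fun z => F z 0 l).
Proof.
move=> F_smooth vs y; rewrite iterD_coord //.
exact/differentiable_coord_comp/F_smooth.
Qed.

Lemma derive_basis (phi : V -> R) y v : differentiable phi y ->
  'D_v phi y = \sum_(l < n) v 0 l * 'D_(delta_mx 0 l) phi y.
Proof.
move=> phi_diff; rewrite deriveE //.
under eq_bigr do rewrite deriveE //.
rewrite {1}(row_sum_delta v) linear_sum; apply: eq_bigr => l _.
by rewrite linearZ.
Qed.

Lemma smooth_Lie (F : V -> V) (phi : V -> R) : smooth F -> smooth phi ->
  smooth (Lie F phi).
Proof.
move=> F_smooth phi_smooth.
have -> : Lie F phi = fun y => \sum_(l < n) F y 0 l * 'D_(delta_mx 0 l) phi y.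
  by apply/funext => y; rewrite /Lie derive_basis //; exact: (phi_smooth [::]).
apply/smoothE => k; apply: differentiable_upto_sum => l.
by apply: differentiable_uptoM; apply: (smoothE _).1;
  [exact: smooth_coord | exact: smooth_derive].
Qed.

Lemma smooth_Lien (F : V -> V) (phi : V -> R) k : smooth F -> smooth phi ->
  smooth (Lien F k phi).
Proof.
move=> F_smooth phi_smooth; elim: k => [//|k IHk].
by rewrite /Lien iterS; exact: smooth_Lie.
Qed.

Lemma grad_mul_tr (m : nat) (g : 'I_m -> V -> V) (phi : V -> R) (x : V) :
  differentiable phi x ->
  grad phi x *m (\matrix_(i < m) g i x)^T = \row_(i < m) Lie (g i) phi x.
Proof.
move=> phi_diff; apply/rowP => i; rewrite !mxE /Lie derive_basis //.
by apply: eq_bigr => l _; rewrite !mxE mulrC.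
Qed.

End Derivatives.

Theorem theorem7 (R : realType) (n m : nat)
    (f : 'rV[R]_n -> 'rV[R]_n) (g : 'I_m -> 'rV[R]_n -> 'rV[R]_n)
    (h : 'rV[R]_n -> R) (r : nat) (x : 'rV[R]_n)
    (hm : (2 <= m)%N) (hrn : (r < n)%N)
    (f_smooth : smooth f) (g_smooth : forall i, smooth (g i))
    (h_smooth : smooth h)
    (hrel : rel_degree f g h r x)
    (hindep : row_free (\matrix_(i < m) g i x)) :
  ~ exists eta : 'rV[R]_n -> 'rV[R]_(n - r),
      differentiable eta x /\
      (* (1) the Jacobian [d xi; d eta] at x is nonsingular *)
      castmx (subnKC (ltnW hrn), erefl n)
        (col_mx (\matrix_(k < r) grad (Lien f k h) x)
                (\matrix_(j < n - r) grad (fun y => eta y 0 j) x))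
        \in unitmx /\
      (* (2) L_{g_i} eta_j = 0 on an open set around x *)
      (exists U : set 'rV[R]_n, open U /\ U x /\
         forall (i : 'I_m) (j : 'I_(n - r)) (y : 'rV[R]_n), U y ->
           Lie (g i) (fun z => eta z 0 j) y = 0).
Proof.
move=> [eta [eta_diff [J_unit [U [_ [Ux Lg_eta]]]]]].
case: hrel => r_gt0 [[U' [_ [U'x Lg_Lfh]]] _].
have r1_lt_n : (r.-1 < n)%N by lia.
suff : (\rank (\matrix_(i < m) g i x)^T <= 1)%N.
  by rewrite mxrank_tr (eqP hindep) => /(leq_trans hm).
apply: (mxrank_le1_unitmx_mul J_unit (i := Ordinal r1_lt_n)) => a a_ne.
rewrite (row_mul a) row_castmx.
case: (split_ordP (cast_ord (esym (subnKC (ltnW hrn))) a)) => [k a_k|j a_j].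
- rewrite a_k rowKu rowK grad_mul_tr; last exact: (smooth_Lien k f_smooth h_smooth [::]).
  apply/rowP => i; rewrite !mxE; apply: Lg_Lfh => //.
  have /(congr1 val) /= a_eq_k := a_k.
  move: a_ne; rewrite -(inj_eq val_inj) /= a_eq_k; have := ltn_ord k; lia.
- rewrite a_j rowKd rowK grad_mul_tr; last exact: differentiable_coord_comp.
  by apply/rowP => i; rewrite !mxE; exact: Lg_eta.
Qed.
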